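(* Let $M\subset\mathbb{R}^2$ be open with coordinates $(x,u)$, let $M^{(1)}$ be the first-order jet space with coordinates $(x,u,u_x)$, and consider the ODE $u_{xx}=\phi(x,u,u_x)$ with associated vector field $\mathbf{A}=\partial_x+u_x\partial_u+\phi\,\partial_{u_x}$. Let $(\partial_u,\lambda_1)$ and $(\partial_u,\lambda_2)$ be the canonical representatives of two non-equivalent generalized $\mathcal{C}^\infty$-symmetries of this ODE. Let $\mathbf{X}_i=\partial_u+\lambda_i\partial_{u_x}$, $\rho=\dfrac{\mathbf{X}_1(\lambda_2)-\mathbf{X}_2(\lambda_1)}{\lambda_1-\lambda_2}$, let $f_1,f_2\in C^\infty(M^{(1)})$ satisfy $\dfrac{\mathbf{X}_1(f_2)}{f_2}=\dfrac{\mathbf{X}_2(f_1)}{f_1}=\rho$, let $\mathbf{Y}_i=f_i\mathbf{X}_i$, $\rho_i=\lambda_i-\mathbf{A}(f_i)/f_i$, and let $g_1,g_2\in C^\infty(M^{(1)})$ satisfy $\mathbf{A}(g_1)=\rho_1g_1$, $\mathbf{Y}_2(g_1)=0$, $\mathbf{A}(g_2)=\rho_2g_2$, $\mathbf{Y}_1(g_2)=0$. Then two functionally independent first integrals $I_1$ and $I_2$ of $\mathbf{A}$, associated to $(\partial_u,\lambda_1)$ and $(\partial_u,\lambda_2)$ respectively, can be found by quadratures from the systems $$(I_1)_x=\frac{\lambda_1u_x-\phi}{f_2g_2(\lambda_2-\lambda_1)},\quad (I_1)_u=\frac{-\lambda_1}{f_2g_2(\lambda_2-\lambda_1)},\quad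 (I_1)_{u_x}=\frac{1}{f_2g_2(\lambda_2-\lambda_1)},$$ $$(I_2)_x=\frac{\lambda_2u_x-\phi}{f_1g_1(\lambda_1-\lambda_2)},\quad (I_2)_u=\frac{-\lambda_2}{f_1g_1(\lambda_1-\lambda_2)},\quad (I_2)_{u_x}=\frac{1}{f_1g_1(\lambda_1-\lambda_2)}.$$
   Context: All functions are smooth on $M^{(1)}$ and all statements are local, on an open set where $\lambda_1-\lambda_2$, $f_1,f_2,g_1,g_2$ do not vanish. For smooth $\xi,\eta,\lambda$ on $M^{(1)}$ and $\mathbf{v}=\xi\partial_x+\eta\partial_u$, the $\lambda$-prolongation is $\mathbf{v}^{[\lambda,(1)]}=\mathbf{v}+\big((\mathbf{A}+\lambda)(\eta)-(\mathbf{A}+\lambda)(\xi)u_x\big)\partial_{u_x}$. The pair $(\mathbf{v},\lambda)$ is a generalized $\mathcal{C}^\infty$-symmetry of the ODE if $[\mathbf{v}^{[\lambda,(1)]},\mathbf{A}]=\lambda\,\mathbf{v}^{[\lambda,(1)]}-(\mathbf{A}+\lambda)(\xi)\,\mathbf{A}$. A first integral of $\mathbf{A}$ associated to $(\mathbf{v},\lambda)$ is a function $I\in C^\infty(M^{(1)})$ with $\mathbf{A}(I)=\mathbf{v}^{[\lambda,(1)]}(I)=0$. Two generalized $\mathcal{C}^\infty$-symmetries $(\mathbf{v}_1,\lambda_1)$, $(\mathbf{v}_2,\lambda_2)$ are $\mathbf{A}$-equivalent if $\{\mathbf{A},\mathbf{v}_1^{[\lambda_1,(1)]},\mathbf{v}_2^{[\lambda_2,(1)]}\}$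 is linearly dependent over $C^\infty(M^{(1)})$. If $Q=\eta-\xi u_x$, the canonical representative of the class of $(\mathbf{v},\lambda)$ is $(\partial_u,\lambda+\mathbf{A}(Q)/Q)$. *)

From Stdlib Require Import Reals List.
From Coquelicot Require Import Coquelicot.
Open Scope R_scope.

(* Smooth functions on (an open subset of) the jet space M^(1), with
   coordinates (x, u, p), p standing for u_x.  Functions are total on R^3;
   only their values on the open set under consideration matter. *)
Definition fn := R -> R -> R -> R.
Definition pt := (R * R * R)%type.

Inductive dir := Dx | Du | Dp.

Definition pd (d : dir) (F : fn) : fn :=
  match d with
  | Dx => fun x u p => Derive (fun t => F t u p) x
  | Du => fun x u p => Derive (fun t => F x t p) u
  | Dp => fun x u p => Derive (fun t => F x u t) p
  end.

Definition ex_pd (d : dir) (F : fn) (x u p : R) : Prop :=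
  match d with
  | Dx => ex_derive (fun t => F t u p) x
  | Du => ex_derive (fun t => F x t p) u
  | Dp => ex_derive (fun t => F x u t) p
  end.

Fixpoint iter_pd (ds : list dir) (F : fn) : fn :=
  match ds with
  | nil => F
  | d :: ds' => pd d (iter_pd ds' F)
  end.

Definition uncurry3 (F : fn) : pt -> R := fun q => F (fst (fst q)) (snd (fst q)) (snd q).

Definition Cinf (U : pt -> Prop) (F : fn) : Prop :=
  forall (ds : list dir) (x u p : R), U (x, u, p) ->
    (forall d, ex_pd d (iter_pd ds F) x u p) /\
    continuous (uncurry3 (iter_pd ds F)) (x, u, p).

Definition subset3 (V U : pt -> Prop) : Prop := forall q, V q -> U q.

(* vector fields on M^(1): a ∂_x + b ∂_u + c ∂_{u_x} *)
Record vf := VF { vx : fn; vu : fn; vp : fn }.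

Definition vapp (V : vf) (F : fn) : fn := fun x u p =>
  vx V x u p * pd Dx F x u p + vu V x u p * pd Du F x u p
  + vp V x u p * pd Dp F x u p.

Definition bracket (V W : vf) : vf :=
  VF (fun x u p => vapp V (vx W) x u p - vapp W (vx V) x u p)
     (fun x u p => vapp V (vu W) x u p - vapp W (vu V) x u p)
     (fun x u p => vapp V (vp W) x u p - vapp W (vp V) x u p).

Definition cst (c : R) : fn := fun _ _ _ => c.

Definition Afield (phi : fn) : vf := VF (cst 1) (fun _ _ p => p) phi.

Definition Alam (phi lam h : fn) : fn := fun x u p =>
  vapp (Afield phi) h x u p + lam x u p * h x u p.

Definition prol (phi lam xi eta : fn) : vf :=
  VF xi eta (fun x u p => Alam phi lam eta x u p - Alam phi lam xi x u p * p).

Definition gen_sym (U : pt -> Prop) (phi xi eta lam : fn) : Prop :=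
  Cinf U xi /\ Cinf U eta /\ Cinf U lam /\
  let P := prol phi lam xi eta in
  let B := bracket P (Afield phi) in
  let c := Alam phi lam xi in
  forall x u p, U (x, u, p) ->
    vx B x u p = lam x u p * vx P x u p - c x u p * vx (Afield phi) x u p /\
    vu B x u p = lam x u p * vu P x u p - c x u p * vu (Afield phi) x u p /\
    vp B x u p = lam x u p * vp P x u p - c x u p * vp (Afield phi) x u p.

Definition A_equiv (U : pt -> Prop) (phi xi1 eta1 lam1 xi2 eta2 lam2 : fn) : Prop :=
  exists a b c : fn, Cinf U a /\ Cinf U b /\ Cinf U c /\
    (exists x u p, U (x, u, p) /\ (a x u p <> 0 \/ b x u p <> 0 \/ c x u p <> 0)) /\
    let P1 := prol phi lam1 xi1 eta1 in
    let P2 := prol phi lam2 xi2 eta2 in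
    let Af := Afield phi in
    forall x u p, U (x, u, p) ->
      a x u p * vx Af x u p + b x u p * vx P1 x u p + c x u p * vx P2 x u p = 0 /\
      a x u p * vu Af x u p + b x u p * vu P1 x u p + c x u p * vu P2 x u p = 0 /\
      a x u p * vp Af x u p + b x u p * vp P1 x u p + c x u p * vp P2 x u p = 0.

Definition first_integral (V : pt -> Prop) (phi xi eta lam I : fn) : Prop :=
  Cinf V I /\
  forall x u p, V (x, u, p) ->
    vapp (Afield phi) I x u p = 0 /\ vapp (prol phi lam xi eta) I x u p = 0.

Definition func_indep (V : pt -> Prop) (I1 I2 : fn) : Prop :=
  forall x u p, V (x, u, p) -> forall a b : R,
    a * pd Dx I1 x u p + b * pd Dx I2 x u p = 0 ->
    a * pd Du I1 x u p + b * pd Du I2 x u p = 0 ->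
    a * pd Dp I1 x u p + b * pd Dp I2 x u p = 0 ->
    a = 0 /\ b = 0.

Definition grad_system (V : pt -> Prop) (I gx gu gp : fn) : Prop :=
  forall x u p, V (x, u, p) ->
    is_derive (fun t => I t u p) x (gx x u p) /\
    is_derive (fun t => I x t p) u (gu x u p) /\
    is_derive (fun t => I x u t) p (gp x u p).

From Pilot Require Import Defs.
From Stdlib Require Import Reals List Lra FunctionalExtensionality.
From Coquelicot Require Import Coquelicot.
Open Scope R_scope.

(* For the canonical pair (∂_u, λ) the symmetry condition reduces to the Riccati
   equation X_λ(φ) - A(λ) = λ², where X_λ = ∂_u + λ ∂_{u_x}.  Together with the
   equations defining ρ, f_i and g_i, this makes the 1-form
     ω_1 = ((λ_1 u_x - φ) dx - λ_1 du + du_x) / (f_2 g_2 (λ_2 - λ_1))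
   closed, so on a box it has a primitive obtained by integrating along coordinate
   segments; the primitive is smooth because its gradient is.  Since ω_1 vanishes on
   A and on X_{λ_1}, every primitive of ω_1 is a first integral associated to
   (∂_u, λ_1), and primitives of ω_1 and ω_2 are independent because the
   (u, u_x)-components of their gradients have determinant proportional to
   λ_1 - λ_2. *)

Definition box (x0 u0 p0 r : R) : pt -> Prop := fun q =>
  Rabs (fst (fst q) - x0) < r /\ Rabs (snd (fst q) - u0) < r /\ Rabs (snd q - p0) < r.

Lemma Rabs_lt_segment c r a b z : Rabs (a - c) < r -> Rabs (b - c) < r ->
  Rmin a b <= z <= Rmax a b -> Rabs (z - c) < r.
Proof.
  intros Ha Hb Hz. unfold Rmin, Rmax in Hz. destruct (Rle_dec a b);
  apply Rabs_def2 in Ha; apply Rabs_def2 in Hb; apply Rabs_def1; lra.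
Qed.

Lemma locally_Rabs_lt c r t : Rabs (t - c) < r -> locally t (fun y => Rabs (y - c) < r).
Proof.
  intros Ht. assert (Hp : 0 < r - Rabs (t - c)) by lra.
  exists (mkposreal _ Hp). intros y Hy. change (Rabs (y - t) < r - Rabs (t - c)) in Hy.
  apply Rabs_def2 in Hy. apply Rabs_def1; split_Rabs; lra.
Qed.

Lemma locally_box x u p (P : pt -> Prop) : locally (x, u, p) P <->
  exists r : posreal, forall q, box x u p r q -> P q.
Proof.
  split; intros [r Hr]; exists r; intros [[x' u'] p'] Hq; apply Hr.
  - destruct Hq as [Hx [Hu Hp]]. split; [split; [exact Hx | exact Hu] | exact Hp].
  - destruct Hq as [[Hx Hu] Hp]. split; [exact Hx | split; [exact Hu | exact Hp]].
Qed.

Lemma box_open x0 u0 p0 r : open (box x0 u0 p0 r).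
Proof.
  intros [[x u] p] [Hx [Hu Hp]]; simpl in *.
  apply locally_box.
  destruct (locally_Rabs_lt _ _ _ Hx) as [e1 E1].
  destruct (locally_Rabs_lt _ _ _ Hu) as [e2 E2].
  destruct (locally_Rabs_lt _ _ _ Hp) as [e3 E3].
  assert (He : 0 < Rmin e1 (Rmin e2 e3)) by (repeat apply Rmin_pos; apply cond_pos).
  exists (mkposreal _ He). intros [[x' u'] p'] [Bx [Bu Bp]]; simpl in *.
  assert (M1 := Rmin_l e1 (Rmin e2 e3)). assert (M2 := Rmin_r e1 (Rmin e2 e3)).
  assert (M3 := Rmin_l e2 e3). assert (M4 := Rmin_r e2 e3).
  repeat split; simpl.
  - apply E1. change (Rabs (x' - x) < e1). lra.
  - apply E2. change (Rabs (u' - u) < e2). lra.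
  - apply E3. change (Rabs (p' - p) < e3). lra.
Qed.

Lemma box_center x0 u0 p0 (r : posreal) : box x0 u0 p0 r (x0, u0, p0).
Proof. repeat split; simpl; rewrite Rminus_diag, Rabs_R0; apply cond_pos. Qed.

Lemma open_contains_box (U : pt -> Prop) x u p : open U -> U (x, u, p) ->
  exists r : posreal, subset3 (box x u p r) U.
Proof. intros HU Hq. exact (proj1 (locally_box x u p U) (HU _ Hq)). Qed.

Lemma pd_ext_open (U : pt -> Prop) (F G : fn) d x u p : open U ->
  (forall x u p, U (x, u, p) -> F x u p = G x u p) -> U (x, u, p) ->
  pd d F x u p = pd d G x u p.
Proof.
  intros HU HFG Hq. destruct (open_contains_box U x u p HU Hq) as [r Hr].
  destruct d; apply Derive_ext_loc; exists r; intros t Ht; apply HFG, Hr;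
    repeat split; simpl; try exact Ht; rewrite Rminus_diag, Rabs_R0; apply cond_pos.
Qed.

Lemma ex_pd_ext_open (U : pt -> Prop) (F G : fn) d x u p : open U ->
  (forall x u p, U (x, u, p) -> F x u p = G x u p) -> U (x, u, p) ->
  ex_pd d F x u p -> ex_pd d G x u p.
Proof.
  intros HU HFG Hq. destruct (open_contains_box U x u p HU Hq) as [r Hr].
  destruct d; apply ex_derive_ext_loc; exists r; intros t Ht; apply HFG, Hr;
    repeat split; simpl; try exact Ht; rewrite Rminus_diag, Rabs_R0; apply cond_pos.
Qed.

Definition cont_pd (U : pt -> Prop) (F : fn) : Prop :=
  forall x u p, U (x, u, p) ->
    (forall d, ex_pd d F x u p) /\ continuous (uncurry3 F) (x, u, p).

Fixpoint Cn (n : nat) (U : pt -> Prop) (F : fn) : Prop :=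
  cont_pd U F /\ match n with O => True | S m => forall d, Cn m U (pd d F) end.

Lemma Cn_cont_pd n U F : Cn n U F -> cont_pd U F.
Proof. destruct n; simpl; tauto. Qed.

Lemma Cn_pred n U F : Cn (S n) U F -> Cn n U F.
Proof. revert F; induction n; intros F [Hb Hd]; simpl; split; auto. Qed.

Lemma Cn_pd n U F d : Cn (S n) U F -> Cn n U (pd d F).
Proof. intros [_ H]. apply H. Qed.

Lemma iter_pd_app ds d F : iter_pd (ds ++ d :: nil) F = iter_pd ds (pd d F).
Proof. induction ds as [|e ds IH]; simpl; [reflexivity | rewrite IH; reflexivity]. Qed.

Lemma Cinf_Cn U F : Cinf U F <-> forall n, Cn n U F.
Proof.
  split.
  - intros H n. revert F H. induction n; intros F H.
    + split; [|exact I]. intros x u p Hq. exact (H nil x u p Hq).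
    + split; [intros x u p Hq; exact (H nil x u p Hq)|].
      intros d. apply IHn. intros ds x u p Hq. rewrite <- iter_pd_app. apply H, Hq.
  - intros H ds. revert F H.
    induction ds as [|d ds IH] using rev_ind; intros F H x u p Hq.
    + exact (Cn_cont_pd 0 U F (H 0%nat) x u p Hq).
    + rewrite iter_pd_app. apply IH; [intros n; apply Cn_pd, H | exact Hq].
Qed.

Lemma Cinf_subset (U V : pt -> Prop) F : subset3 V U -> Cinf U F -> Cinf V F.
Proof. intros HVU H ds x u p Hq. apply H, HVU, Hq. Qed.

Lemma Cn_ext_open n (U : pt -> Prop) (F G : fn) : open U ->
  (forall x u p, U (x, u, p) -> F x u p = G x u p) -> Cn n U F -> Cn n U G.
Proof.
  revert F G. induction n; intros F G HU HFG [Hb Hd]; split; try exact I.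
  3: { intros d. apply (IHn (pd d F)); auto. intros x u p Hq. apply pd_ext_open with U; auto. }
  all: intros x u p Hq; destruct (Hb x u p Hq) as [Hex Hc]; split;
    [ intros d; apply ex_pd_ext_open with U F; auto
    | apply continuous_ext_loc with (uncurry3 F); [|exact Hc];
      apply (filter_imp U); [intros [[a b] c] Habc; apply HFG, Habc | apply HU, Hq] ].
Qed.

Definition fplus (F G : fn) : fn := fun x u p => F x u p + G x u p.
Definition fsub (F G : fn) : fn := fun x u p => F x u p - G x u p.
Definition fopp (F : fn) : fn := fun x u p => - F x u p.
Definition fmult (F G : fn) : fn := fun x u p => F x u p * G x u p.
Definition finv (F : fn) : fn := fun x u p => / F x u p.
Definition fdiv (F G : fn) : fn := fun x u p => F x u p / G x u p.
Definition projp : fn := fun _ _ p => p.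

Lemma continuous3_plus F G q : continuous (uncurry3 F) q -> continuous (uncurry3 G) q ->
  continuous (uncurry3 (fplus F G)) q.
Proof. intros H1 H2. exact (continuous_plus _ _ _ H1 H2). Qed.

Lemma continuous3_mult F G q : continuous (uncurry3 F) q -> continuous (uncurry3 G) q ->
  continuous (uncurry3 (fmult F G)) q.
Proof. intros H1 H2. exact (continuous_mult _ _ _ H1 H2). Qed.

Lemma continuous3_inv F q : continuous (uncurry3 F) q -> uncurry3 F q <> 0 ->
  continuous (uncurry3 (finv F)) q.
Proof. intros H1 H2. exact (continuous_comp _ _ _ H1 (continuous_Rinv _ H2)). Qed.

Lemma ex_pd_plus d F G x u p :
  ex_pd d F x u p -> ex_pd d G x u p -> ex_pd d (fplus F G) x u p.
Proof. destruct d; simpl; unfold fplus; intros H1 H2; exact (ex_derive_plus _ _ _ H1 H2). Qed.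
Lemma ex_pd_sub d F G x u p :
  ex_pd d F x u p -> ex_pd d G x u p -> ex_pd d (fsub F G) x u p.
Proof. destruct d; simpl; unfold fsub; intros H1 H2; exact (ex_derive_minus _ _ _ H1 H2). Qed.
Lemma ex_pd_opp d F x u p : ex_pd d F x u p -> ex_pd d (fopp F) x u p.
Proof. destruct d; simpl; unfold fopp; intros H1; exact (ex_derive_opp _ _ H1). Qed.
Lemma ex_pd_mult d F G x u p :
  ex_pd d F x u p -> ex_pd d G x u p -> ex_pd d (fmult F G) x u p.
Proof. destruct d; simpl; unfold fmult; apply ex_derive_mult. Qed.
Lemma ex_pd_inv d F x u p : ex_pd d F x u p -> F x u p <> 0 -> ex_pd d (finv F) x u p.
Proof. destruct d; simpl; unfold finv; intros H1 H2; exact (ex_derive_inv _ _ H1 H2). Qed.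
Lemma ex_pd_cst d c x u p : ex_pd d (cst c) x u p.
Proof.
  destruct d; simpl; unfold cst; apply (ex_derive_const (K := R_AbsRing) (V := R_NormedModule)).
Qed.
Lemma ex_pd_projp d x u p : ex_pd d projp x u p.
Proof. destruct d; simpl; unfold projp; auto_derive; auto. Qed.

Lemma pd_plus d F G x u p : ex_pd d F x u p -> ex_pd d G x u p ->
  pd d (fplus F G) x u p = pd d F x u p + pd d G x u p.
Proof. destruct d; simpl; unfold fplus; intros H1 H2; exact (Derive_plus _ _ _ H1 H2). Qed.
Lemma pd_sub d F G x u p : ex_pd d F x u p -> ex_pd d G x u p ->
  pd d (fsub F G) x u p = pd d F x u p - pd d G x u p.
Proof. destruct d; simpl; unfold fsub; intros H1 H2; exact (Derive_minus _ _ _ H1 H2). Qed.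
Lemma pd_opp d F x u p : pd d (fopp F) x u p = - pd d F x u p.
Proof. destruct d; simpl; unfold fopp; apply Derive_opp. Qed.
Lemma pd_mult d F G x u p : ex_pd d F x u p -> ex_pd d G x u p ->
  pd d (fmult F G) x u p = pd d F x u p * G x u p + F x u p * pd d G x u p.
Proof. destruct d; simpl; unfold fmult; intros H1 H2; exact (Derive_mult _ _ _ H1 H2). Qed.
Lemma pd_inv d F x u p : ex_pd d F x u p -> F x u p <> 0 ->
  pd d (finv F) x u p = - pd d F x u p / (F x u p ^ 2).
Proof. destruct d; simpl; unfold finv; intros H1 H2; exact (Derive_inv _ _ H1 H2). Qed.
Lemma pd_div d F G x u p : ex_pd d F x u p -> ex_pd d G x u p -> G x u p <> 0 ->
  pd d (fdiv F G) x u p = (pd d F x u p * G x u p - F x u p * pd d G x u p) / (G x u p ^ 2).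
Proof. destruct d; simpl; unfold fdiv; intros H1 H2 H3; exact (Derive_div _ _ _ H1 H2 H3). Qed.

Lemma pd_cst d c : pd d (cst c) = cst 0.
Proof.
  apply functional_extensionality; intros x; apply functional_extensionality; intros u;
  apply functional_extensionality; intros p. destruct d; simpl; unfold cst; apply Derive_const.
Qed.

Lemma pd_projp d : pd d projp = cst (match d with Defs.Dp => 1 | _ => 0 end).
Proof.
  apply functional_extensionality; intros x; apply functional_extensionality; intros u;
  apply functional_extensionality; intros p.
  destruct d; simpl; unfold projp, cst; [apply Derive_const | apply Derive_const | apply Derive_id].
Qed.

Lemma Cn_cst n U c : Cn n U (cst c).
Proof.
  revert c; induction n; intros c; split; try exact I;
    try (intros x u p _; split; [intros; apply ex_pd_cst | apply continuous_const]).
  intros d. rewrite pd_cst. apply IHn.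
Qed.

Lemma Cn_projp n U : Cn n U projp.
Proof.
  destruct n; split; try exact I;
    try (intros x u p _; split; [intros; apply ex_pd_projp | apply continuous_snd]).
  intros d. rewrite pd_projp. apply Cn_cst.
Qed.

Section SmoothAlgebra.
Variable U : pt -> Prop.
Hypothesis HU : open U.

Lemma Cn_plus n F G : Cn n U F -> Cn n U G -> Cn n U (fplus F G).
Proof.
  revert F G; induction n; intros F G HF HG; split; try exact I;
  try (intros x u p Hq; destruct (Cn_cont_pd _ _ _ HF x u p Hq) as [F1 F2];
       destruct (Cn_cont_pd _ _ _ HG x u p Hq) as [G1 G2]; split;
       [intros d; apply ex_pd_plus; auto | apply continuous3_plus; auto]).
  intros d. apply Cn_ext_open with (fplus (pd d F) (pd d G)); auto.
  - intros x u p Hq. symmetry. apply pd_plus.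
    + apply (Cn_cont_pd _ _ _ HF x u p Hq).
    + apply (Cn_cont_pd _ _ _ HG x u p Hq).
  - apply IHn; apply Cn_pd; auto.
Qed.

Lemma Cn_mult n F G : Cn n U F -> Cn n U G -> Cn n U (fmult F G).
Proof.
  revert F G; induction n; intros F G HF HG; split; try exact I;
  try (intros x u p Hq; destruct (Cn_cont_pd _ _ _ HF x u p Hq) as [F1 F2];
       destruct (Cn_cont_pd _ _ _ HG x u p Hq) as [G1 G2]; split;
       [intros d; apply ex_pd_mult; auto | apply continuous3_mult; auto]).
  intros d. apply Cn_ext_open with (fplus (fmult (pd d F) G) (fmult F (pd d G))); auto.
  - intros x u p Hq. symmetry. apply pd_mult.
    + apply (Cn_cont_pd _ _ _ HF x u p Hq).
    + apply (Cn_cont_pd _ _ _ HG x u p Hq).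
  - apply Cn_plus; apply IHn; (apply Cn_pd; assumption) || (apply Cn_pred; assumption).
Qed.

Lemma Cn_inv n F : (forall x u p, U (x, u, p) -> F x u p <> 0) ->
  Cn n U F -> Cn n U (finv F).
Proof.
  intros Hnz. revert F Hnz; induction n; intros F Hnz HF; split; try exact I;
  try (intros x u p Hq; destruct (Cn_cont_pd _ _ _ HF x u p Hq) as [F1 F2]; split;
       [intros d; apply ex_pd_inv; auto | apply continuous3_inv; auto; apply Hnz; auto]).
  intros d.
  apply Cn_ext_open with (fmult (fmult (fmult (cst (-1)) (pd d F)) (finv F)) (finv F)); auto.
  - intros x u p Hq. specialize (Hnz x u p Hq).
    rewrite pd_inv; [|apply (Cn_cont_pd _ _ _ HF x u p Hq) | exact Hnz].
    unfold fmult, finv, cst. field. exact Hnz.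
  - assert (Hinv : Cn n U (finv F)) by (apply IHn; auto; apply Cn_pred; auto).
    repeat apply Cn_mult; auto. apply Cn_cst. apply Cn_pd; auto.
Qed.

Lemma Cn_sub n F G : Cn n U F -> Cn n U G -> Cn n U (fsub F G).
Proof.
  intros HF HG. apply Cn_ext_open with (fplus F (fmult (cst (-1)) G)); auto.
  - intros; unfold fplus, fmult, fsub, cst; ring.
  - apply Cn_plus; auto. apply Cn_mult; auto. apply Cn_cst.
Qed.

Lemma Cn_opp n F : Cn n U F -> Cn n U (fopp F).
Proof.
  intros HF. apply Cn_ext_open with (fmult (cst (-1)) F); auto.
  - intros; unfold fmult, fopp, cst; ring.
  - apply Cn_mult; auto. apply Cn_cst.
Qed.

Lemma Cn_div n F G : (forall x u p, U (x, u, p) -> G x u p <> 0) ->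
  Cn n U F -> Cn n U G -> Cn n U (fdiv F G).
Proof.
  intros Hnz HF HG. apply Cn_ext_open with (fmult F (finv G)); auto.
  apply Cn_mult; auto. apply Cn_inv; auto.
Qed.

End SmoothAlgebra.

Lemma continuous_pair {T U V : UniformSpace} (f : T -> U) (g : T -> V) t :
  continuous f t -> continuous g t -> continuous (fun s => (f s, g s)) t.
Proof.
  intros Hf Hg. apply (continuous_comp_2 f g pair t Hf Hg).
  apply continuous_ext with (fun y => y); [intros [y1 y2]; reflexivity | apply continuous_id].
Qed.

Lemma continuous3_slice {T : UniformSpace} (F : fn) (a b c : T -> R) t :
  continuous a t -> continuous b t -> continuous c t ->
  continuous (uncurry3 F) (a t, b t, c t) ->
  continuous (fun s => F (a s) (b s) (c s)) t.
Proof.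
  intros Ha Hb Hc HF.
  apply (continuous_comp (fun s => (a s, b s, c s)) (uncurry3 F)); [|exact HF].
  apply continuous_pair; [apply continuous_pair|]; assumption.
Qed.

Lemma continuous3_slice_x F x u p :
  continuous (uncurry3 F) (x, u, p) -> continuous (fun t => F t u p) x.
Proof.
  apply (continuous3_slice F (fun t => t) (fun _ => u) (fun _ => p));
    apply continuous_id || apply continuous_const.
Qed.

Lemma continuous3_slice_u F x u p :
  continuous (uncurry3 F) (x, u, p) -> continuous (fun t => F x t p) u.
Proof.
  apply (continuous3_slice F (fun _ => x) (fun t => t) (fun _ => p));
    apply continuous_id || apply continuous_const.
Qed.

Lemma continuous3_slice_p F x u p :
  continuous (uncurry3 F) (x, u, p) -> continuous (fun t => F x u t) p.
Proof.
  apply (continuous3_slice F (fun _ => x) (fun _ => u) (fun t => t));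
    apply continuous_id || apply continuous_const.
Qed.

Lemma continuity_2d_pt_xu F x u p :
  continuous (uncurry3 F) (x, u, p) -> continuity_2d_pt (fun s t => F s t p) x u.
Proof.
  intros H. apply continuity_2d_pt_filterlim.
  apply (continuous3_slice F fst snd (fun _ => p) (x, u));
    [apply continuous_fst | apply continuous_snd | apply continuous_const | exact H].
Qed.

Lemma continuity_2d_pt_xp F x u p :
  continuous (uncurry3 F) (x, u, p) -> continuity_2d_pt (fun s t => F s u t) x p.
Proof.
  intros H. apply continuity_2d_pt_filterlim.
  apply (continuous3_slice F fst (fun _ => u) snd (x, p));
    [apply continuous_fst | apply continuous_const | apply continuous_snd | exact H].
Qed.

Lemma continuity_2d_pt_up F x u p :
  continuous (uncurry3 F) (x, u, p) -> continuity_2d_pt (fun s t => F x s t) u p.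
Proof.
  intros H. apply continuity_2d_pt_filterlim.
  apply (continuous3_slice F (fun _ => x) fst snd (u, p));
    [apply continuous_const | apply continuous_fst | apply continuous_snd | exact H].
Qed.

Lemma continuity_2d_pt_slice (f : R -> R -> R) x y :
  continuity_2d_pt f x y -> continuous (fun t => f x t) y.
Proof.
  intros H. apply filterlim_locally. intros eps. destruct (H eps) as [d Hd].
  exists d. intros t Ht. apply Hd; [rewrite Rminus_diag, Rabs_R0; apply cond_pos | exact Ht].
Qed.

Lemma RInt_ext_interval (f g : R -> R) c r a b : Rabs (a - c) < r -> Rabs (b - c) < r ->
  (forall s, Rabs (s - c) < r -> f s = g s) -> RInt f a b = RInt g a b.
Proof.
  intros Ha Hb H. apply RInt_ext. intros s Hs. apply H.
  apply (Rabs_lt_segment c r a b); auto. lra.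
Qed.

Lemma is_derive_RInt_upper (g : R -> R) c r a t : Rabs (a - c) < r -> Rabs (t - c) < r ->
  (forall s, Rabs (s - c) < r -> continuous g s) ->
  is_derive (fun t => RInt g a t) t (g t).
Proof.
  intros Ha Ht Hg. apply is_derive_RInt with (f := g) (a := a); [|apply Hg, Ht].
  apply (filter_imp (fun y => Rabs (y - c) < r)); [|apply locally_Rabs_lt, Ht].
  intros y Hy. apply (@RInt_correct R_CompleteNormedModule), ex_RInt_continuous.
  intros z Hz. apply Hg, (Rabs_lt_segment c r a y); auto.
Qed.

Lemma RInt_of_is_derive (h dh : R -> R) c r a b : Rabs (a - c) < r -> Rabs (b - c) < r ->
  (forall s, Rabs (s - c) < r -> is_derive h s (dh s) /\ continuous dh s) ->
  RInt dh a b = h b - h a.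
Proof.
  intros Ha Hb H. apply is_RInt_unique, (is_RInt_derive h dh);
    intros z Hz; apply H, (Rabs_lt_segment c r a b); auto.
Qed.

Lemma is_derive_RInt_param_interval (f : R -> R -> R) z cz rz cs rs a b :
  Rabs (z - cz) < rz -> Rabs (a - cs) < rs -> Rabs (b - cs) < rs ->
  (forall z s, Rabs (z - cz) < rz -> Rabs (s - cs) < rs ->
     ex_derive (fun z' => f z' s) z /\
     continuity_2d_pt (fun z s => Derive (fun z' => f z' s) z) z s /\
     continuity_2d_pt f z s) ->
  is_derive (fun z => RInt (fun s => f z s) a b) z
    (RInt (fun s => Derive (fun z' => f z' s) z) a b).
Proof.
  intros Hz Ha Hb H. apply is_derive_RInt_param.
  - apply (filter_imp (fun y => Rabs (y - cz) < rz)); [|apply locally_Rabs_lt, Hz].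
    intros y Hy t Ht. apply H; auto. apply (Rabs_lt_segment cs rs a b); auto.
  - intros t Ht. apply H; auto. apply (Rabs_lt_segment cs rs a b); auto.
  - apply (filter_imp (fun y => Rabs (y - cz) < rz)); [|apply locally_Rabs_lt, Hz].
    intros y Hy. apply (@ex_RInt_continuous R_CompleteNormedModule).
    intros t Ht. apply continuity_2d_pt_slice, H; auto.
    apply (Rabs_lt_segment cs rs a b); auto.
Qed.

Lemma is_derive_plus3 (f g h : R -> R) x l1 l2 l3 l :
  is_derive f x l1 -> is_derive g x l2 -> is_derive h x l3 -> l = l1 + l2 + l3 ->
  is_derive (fun t => f t + g t + h t) x l.
Proof.
  intros H1 H2 H3 ->. apply (is_derive_plus (fun t => f t + g t) h); auto.
  apply (is_derive_plus f g); auto.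
Qed.

Lemma Cn1_at (U : pt -> Prop) F x u p : Cn 1 U F -> U (x, u, p) ->
  (forall d, ex_pd d F x u p) /\ continuous (uncurry3 F) (x, u, p) /\
  (forall d, continuous (uncurry3 (pd d F)) (x, u, p)).
Proof.
  intros [Hb Hd] Hq. destruct (Hb x u p Hq) as [H1 H2]. repeat split; auto.
  intros d. exact (proj2 (proj1 (Hd d) x u p Hq)).
Qed.

Definition axis_integral (x0 u0 p0 : R) (a b c : fn) : fn := fun x u p =>
  RInt (fun s => a s u0 p0) x0 x + RInt (fun s => b x s p0) u0 u + RInt (fun s => c x u s) p0 p.

Section Poincare.
Variables (x0 u0 p0 : R) (r : posreal) (a b c : fn).
Hypotheses (Ca : Cn 1 (box x0 u0 p0 r) a) (Cb : Cn 1 (box x0 u0 p0 r) b)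
  (Cc : Cn 1 (box x0 u0 p0 r) c).
Hypothesis closed : forall x u p, box x0 u0 p0 r (x, u, p) ->
  pd Defs.Du a x u p = pd Defs.Dx b x u p /\ pd Defs.Dp a x u p = pd Defs.Dx c x u p /\
  pd Defs.Dp b x u p = pd Defs.Du c x u p.

Let Cn1_box F x u p : Cn 1 (box x0 u0 p0 r) F ->
  Rabs (x - x0) < r -> Rabs (u - u0) < r -> Rabs (p - p0) < r ->
  (forall d, ex_pd d F x u p) /\ continuous (uncurry3 F) (x, u, p) /\
  (forall d, continuous (uncurry3 (pd d F)) (x, u, p)).
Proof. intros HF Hx Hu Hp. apply (Cn1_at _ F x u p HF). repeat split; assumption. Qed.

Let Rabs_center_lt t : Rabs (t - t) < r.
Proof. rewrite Rminus_diag, Rabs_R0. apply cond_pos. Qed.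

Lemma axis_integral_dx x u p : box x0 u0 p0 r (x, u, p) ->
  is_derive (fun t => axis_integral x0 u0 p0 a b c t u p) x (a x u p).
Proof.
  intros [Hx [Hu Hp]]; simpl in Hx, Hu, Hp.
  apply (is_derive_plus3 (fun t => RInt (fun s => a s u0 p0) x0 t)
    (fun t => RInt (fun s => b t s p0) u0 u) (fun t => RInt (fun s => c t u s) p0 p) x
    (a x u0 p0) (RInt (fun s => Derive (fun z => b z s p0) x) u0 u)
    (RInt (fun s => Derive (fun z => c z u s) x) p0 p)).
  - apply (is_derive_RInt_upper (fun s => a s u0 p0) x0 r); auto. intros s Hs.
    apply continuous3_slice_x, (Cn1_box a s u0 p0); auto.
  - apply (is_derive_RInt_param_interval (fun z s => b z s p0) x x0 r u0 r); auto.
    intros z s Hz Hs. destruct (Cn1_box b z s p0) as [E1 [E2 E3]]; auto.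
    split; [apply (E1 Defs.Dx) | split].
    + apply (continuity_2d_pt_xu (pd Defs.Dx b)), E3.
    + apply (continuity_2d_pt_xu b), E2.
  - apply (is_derive_RInt_param_interval (fun z s => c z u s) x x0 r p0 r); auto.
    intros z s Hz Hs. destruct (Cn1_box c z u s) as [E1 [E2 E3]]; auto.
    split; [apply (E1 Defs.Dx) | split].
    + apply (continuity_2d_pt_xp (pd Defs.Dx c)), E3.
    + apply (continuity_2d_pt_xp c), E2.
  - (* By closedness the last two integrands are ∂_u a and ∂_p a, which telescope. *)
    rewrite (RInt_ext_interval _ (fun s => pd Defs.Du a x s p0) u0 r u0 u); auto;
      [| intros s Hs; symmetry; apply closed; repeat split; auto].
    rewrite (RInt_ext_interval _ (fun s => pd Defs.Dp a x u s) p0 r p0 p); auto;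
      [| intros s Hs; symmetry; apply closed; repeat split; auto].
    rewrite (RInt_of_is_derive (fun s => a x s p0) _ u0 r u0 u); auto;
      [| intros s Hs; destruct (Cn1_box a x s p0) as [E1 [_ E3]]; auto;
         split; [apply (Derive_correct (fun t => a x t p0)), (E1 Defs.Du)
                |apply (continuous3_slice_u (pd Defs.Du a)), E3]].
    rewrite (RInt_of_is_derive (fun s => a x u s) _ p0 r p0 p); auto;
      [| intros s Hs; destruct (Cn1_box a x u s) as [E1 [_ E3]]; auto;
         split; [apply (Derive_correct (fun t => a x u t)), (E1 Defs.Dp)
                |apply (continuous3_slice_p (pd Defs.Dp a)), E3]].
    ring.
Qed.

Lemma axis_integral_du x u p : box x0 u0 p0 r (x, u, p) ->
  is_derive (fun t => axis_integral x0 u0 p0 a b c x t p) u (b x u p).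
Proof.
  intros [Hx [Hu Hp]]; simpl in Hx, Hu, Hp.
  apply (is_derive_plus3 (fun _ => RInt (fun s => a s u0 p0) x0 x)
    (fun t => RInt (fun s => b x s p0) u0 t) (fun t => RInt (fun s => c x t s) p0 p) u
    0 (b x u p0) (RInt (fun s => Derive (fun z => c x z s) u) p0 p)).
  - exact (@is_derive_const R_AbsRing R_NormedModule _ _).
  - apply (is_derive_RInt_upper (fun s => b x s p0) u0 r); auto. intros s Hs.
    apply continuous3_slice_u, (Cn1_box b x s p0); auto.
  - apply (is_derive_RInt_param_interval (fun z s => c x z s) u u0 r p0 r); auto.
    intros z s Hz Hs. destruct (Cn1_box c x z s) as [E1 [E2 E3]]; auto.
    split; [apply (E1 Defs.Du) | split].
    + apply (continuity_2d_pt_up (pd Defs.Du c)), E3.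
    + apply (continuity_2d_pt_up c), E2.
  - rewrite (RInt_ext_interval _ (fun s => pd Defs.Dp b x u s) p0 r p0 p); auto;
      [| intros s Hs; symmetry; apply closed; repeat split; auto].
    rewrite (RInt_of_is_derive (fun s => b x u s) _ p0 r p0 p); auto;
      [| intros s Hs; destruct (Cn1_box b x u s) as [E1 [_ E3]]; auto;
         split; [apply (Derive_correct (fun t => b x u t)), (E1 Defs.Dp)
                |apply (continuous3_slice_p (pd Defs.Dp b)), E3]].
    ring.
Qed.

Lemma axis_integral_dp x u p : box x0 u0 p0 r (x, u, p) ->
  is_derive (fun t => axis_integral x0 u0 p0 a b c x u t) p (c x u p).
Proof.
  intros [Hx [Hu Hp]]; simpl in Hx, Hu, Hp.
  apply (is_derive_plus3 (fun _ => RInt (fun s => a s u0 p0) x0 x)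
    (fun _ => RInt (fun s => b x s p0) u0 u) (fun t => RInt (fun s => c x u s) p0 t) p
    0 0 (c x u p)); try exact (@is_derive_const R_AbsRing R_NormedModule _ _); [|ring].
  apply (is_derive_RInt_upper (fun s => c x u s) p0 r); auto. intros s Hs.
  apply continuous3_slice_p, (Cn1_box c x u s); auto.
Qed.

Lemma grad_axis_integral :
  grad_system (box x0 u0 p0 r) (axis_integral x0 u0 p0 a b c) a b c.
Proof.
  intros x u p Hq. split; [|split];
    [apply axis_integral_dx | apply axis_integral_du | apply axis_integral_dp]; exact Hq.
Qed.

End Poincare.

Lemma Rabs_sub_le_of_derive (h dh : R -> R) c rho M a b :
  Rabs (a - c) < rho -> Rabs (b - c) < rho ->
  (forall s, Rabs (s - c) < rho -> is_derive h s (dh s) /\ Rabs (dh s) <= M) ->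
  Rabs (h b - h a) <= M * Rabs (b - a).
Proof.
  intros Ha Hb H.
  assert (Hseg : forall s, Rmin a b <= s <= Rmax a b -> Rabs (s - c) < rho)
    by (intros s Hs; apply (Rabs_lt_segment c rho a b); auto).
  destruct (MVT_gen h a b dh) as [z [Hz ->]].
  - intros s Hs. apply H, Hseg. lra.
  - intros s Hs. apply continuity_pt_filterlim.
    apply (ex_derive_continuous (K := R_AbsRing) (V := R_NormedModule)).
    exists (dh s). apply H, Hseg, Hs.
  - rewrite Rabs_mult. apply Rmult_le_compat_r; [apply Rabs_pos | apply H, Hseg, Hz].
Qed.

Lemma locally_bounded_continuous3 (g : fn) x u p : continuous (uncurry3 g) (x, u, p) ->
  locally (x, u, p) (fun q => Rabs (uncurry3 g q) <= Rabs (g x u p) + 1).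
Proof.
  intros H. apply (filter_imp (fun q => ball (g x u p) 1 (uncurry3 g q))).
  - intros q Hq. change (Rabs (uncurry3 g q - g x u p) < 1) in Hq.
    replace (uncurry3 g q) with (g x u p + (uncurry3 g q - g x u p)) by ring.
    eapply Rle_trans; [apply Rabs_triang | lra].
  - exact (H _ (locally_ball (g x u p) (mkposreal 1 Rlt_0_1))).
Qed.

Section GradientBound.
Variables (V : pt -> Prop) (I ga gb gc : fn) (x u p rho M : R).
Hypothesis HI : grad_system V I ga gb gc.
Hypothesis bounded : forall x' u' p', box x u p rho (x', u', p') ->
  V (x', u', p') /\ Rabs (ga x' u' p') <= M /\ Rabs (gb x' u' p') <= M /\
  Rabs (gc x' u' p') <= M.

Lemma Rabs_increment_le x' u' p' : box x u p rho (x', u', p') ->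
  Rabs (I x' u' p' - I x u p) <= M * (Rabs (x' - x) + Rabs (u' - u) + Rabs (p' - p)).
Proof.
  intros [Hx [Hu Hp]]; simpl in Hx, Hu, Hp.
  assert (Z : forall t, Rabs (t - t) < rho)
    by (intros t; rewrite Rminus_diag, Rabs_R0; eapply Rle_lt_trans; [apply Rabs_pos | exact Hx]).
  assert (Sp : Rabs (I x' u' p' - I x' u' p) <= M * Rabs (p' - p)).
  { apply (Rabs_sub_le_of_derive (fun t => I x' u' t) (fun t => gc x' u' t) p rho); auto.
    intros s Hs. destruct (bounded x' u' s) as [Vs [_ [_ B]]]; [repeat split; auto|].
    split; [apply (HI _ _ _ Vs) | exact B]. }
  assert (Su : Rabs (I x' u' p - I x' u p) <= M * Rabs (u' - u)).
  { apply (Rabs_sub_le_of_derive (fun t => I x' t p) (fun t => gb x' t p) u rho); auto.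
    intros s Hs. destruct (bounded x' s p) as [Vs [_ [B _]]]; [repeat split; auto|].
    split; [apply (HI _ _ _ Vs) | exact B]. }
  assert (Sx : Rabs (I x' u p - I x u p) <= M * Rabs (x' - x)).
  { apply (Rabs_sub_le_of_derive (fun t => I t u p) (fun t => ga t u p) x rho); auto.
    intros s Hs. destruct (bounded s u p) as [Vs [B _]]; [repeat split; auto|].
    split; [apply (HI _ _ _ Vs) | exact B]. }
  replace (I x' u' p' - I x u p) with
    ((I x' u' p' - I x' u' p) + (I x' u' p - I x' u p) + (I x' u p - I x u p)) by ring.
  assert (T1 := Rabs_triang (I x' u' p' - I x' u' p + (I x' u' p - I x' u p)) (I x' u p - I x u p)).
  assert (T2 := Rabs_triang (I x' u' p' - I x' u' p) (I x' u' p - I x' u p)).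
  lra.
Qed.

End GradientBound.

Lemma continuous_of_grad (V : pt -> Prop) (I ga gb gc : fn) x u p : open V ->
  grad_system V I ga gb gc -> V (x, u, p) ->
  continuous (uncurry3 ga) (x, u, p) -> continuous (uncurry3 gb) (x, u, p) ->
  continuous (uncurry3 gc) (x, u, p) -> continuous (uncurry3 I) (x, u, p).
Proof.
  intros HV HI Hq Ca Cb Cc.
  set (M := Rabs (ga x u p) + 1 + (Rabs (gb x u p) + 1) + (Rabs (gc x u p) + 1)).
  assert (HM : 0 < M)
    by (unfold M; generalize (Rabs_pos (ga x u p)) (Rabs_pos (gb x u p)) (Rabs_pos (gc x u p));
        lra).
  assert (Hnear : locally (x, u, p) (fun q => V q /\
      Rabs (uncurry3 ga q) <= M /\ Rabs (uncurry3 gb q) <= M /\ Rabs (uncurry3 gc q) <= M)).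
  { assert (Ba := locally_bounded_continuous3 ga x u p Ca).
    assert (Bb := locally_bounded_continuous3 gb x u p Cb).
    assert (Bc := locally_bounded_continuous3 gc x u p Cc).
    generalize (filter_and _ _ (HV _ Hq) (filter_and _ _ Ba (filter_and _ _ Bb Bc))).
    apply filter_imp. intros q [Vq [Qa [Qb Qc]]].
    generalize (Rabs_pos (ga x u p)) (Rabs_pos (gb x u p)) (Rabs_pos (gc x u p)).
    unfold M; repeat split; auto; lra. }
  apply locally_box in Hnear. destruct Hnear as [rho Hrho].
  apply filterlim_locally. intros eps.
  assert (Heta : 0 < Rmin rho (eps / (3 * M)))
    by (apply Rmin_pos; [apply cond_pos | apply Rdiv_lt_0_compat; [apply cond_pos | lra]]).
  apply locally_box. exists (mkposreal _ Heta).
  intros [[x' u'] p'] [Hx [Hu Hp]]; simpl in Hx, Hu, Hp.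
  assert (K1 := Rmin_l rho (eps / (3 * M))). assert (K2 := Rmin_r rho (eps / (3 * M))).
  change (Rabs (I x' u' p' - I x u p) < eps).
  eapply Rle_lt_trans.
  - apply (Rabs_increment_le V I ga gb gc x u p rho M HI); [|repeat split; simpl; lra].
    intros x'' u'' p'' Hb. exact (Hrho _ Hb).
  - assert (E : M * (eps / (3 * M)) = eps / 3) by (field; lra).
    assert (Hs : Rabs (x' - x) + Rabs (u' - u) + Rabs (p' - p) < 3 * (eps / (3 * M))) by lra.
    apply Rmult_lt_compat_l with (r := M) in Hs; [lra | exact HM].
Qed.

Lemma grad_system_pd V I ga gb gc x u p : grad_system V I ga gb gc -> V (x, u, p) ->
  pd Defs.Dx I x u p = ga x u p /\ pd Defs.Du I x u p = gb x u p /\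
  pd Defs.Dp I x u p = gc x u p.
Proof.
  intros HI Hq. destruct (HI x u p Hq) as (Ex & Eu & Ep).
  split; [|split]; apply is_derive_unique; assumption.
Qed.

Lemma Cinf_of_grad (V : pt -> Prop) (I ga gb gc : fn) : open V ->
  grad_system V I ga gb gc -> Cinf V ga -> Cinf V gb -> Cinf V gc -> Cinf V I.
Proof.
  intros HV HI Ha Hb Hc.
  assert (HI0 : cont_pd V I).
  { intros x u p Hq. split.
    - intros d. destruct (HI x u p Hq) as [Ex [Eu Ep]]. destruct d; eexists; eauto.
    - apply (continuous_of_grad V I ga gb gc); auto;
        [apply (Ha nil) | apply (Hb nil) | apply (Hc nil)]; exact Hq. }
  apply Cinf_Cn. rewrite Cinf_Cn in Ha, Hb, Hc.
  intros [|n]; split; auto. intros d.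
  destruct d; [apply Cn_ext_open with ga | apply Cn_ext_open with gb | apply Cn_ext_open with gc];
    auto; intros x u p Hq; symmetry; apply (grad_system_pd _ _ _ _ _ _ _ _ HI Hq).
Qed.

Definition Xfield (lam : fn) : vf := VF (cst 0) (cst 1) lam.

Definition riccati (U : pt -> Prop) (phi lam : fn) : Prop :=
  forall x u p, U (x, u, p) ->
    vapp (Xfield lam) phi x u p - vapp (Afield phi) lam x u p = lam x u p * lam x u p.

(* For (L, M, f, g) = (λ_1, λ_2, f_2, g_2) these are the hypotheses X_1(f_2)/f_2 = ρ,
   A(g_2) = ρ_2 g_2 and Y_1(g_2) = 0; for (λ_2, λ_1, f_1, g_1) the other three. *)
Definition quadrature_data (U : pt -> Prop) (phi L M f g : fn) : Prop :=
  forall x u p, U (x, u, p) ->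
    L x u p - M x u p <> 0 /\ f x u p <> 0 /\ g x u p <> 0 /\
    vapp (Xfield L) f x u p / f x u p =
      (vapp (Xfield L) M x u p - vapp (Xfield M) L x u p) / (L x u p - M x u p) /\
    vapp (Afield phi) g x u p = (M x u p - vapp (Afield phi) f x u p / f x u p) * g x u p /\
    vapp (Xfield L) g x u p = 0.

Lemma Rmult3_neq0 a b c : a <> 0 -> b <> 0 -> c <> 0 -> a * b * c <> 0.
Proof.
  intros Ha Hb Hc. apply Rmult_integral_contrapositive_currified; [|exact Hc].
  apply Rmult_integral_contrapositive_currified; assumption.
Qed.

Lemma Cinf_ex_pd U F x u p : Cinf U F -> U (x, u, p) -> forall d, ex_pd d F x u p.
Proof. intros H Hq. exact (proj1 (H nil x u p Hq)). Qed.

Lemma div_eq_mul a f b : a / f = b -> f <> 0 -> a = f * b.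
Proof. intros <- Hf. field. exact Hf. Qed.

Section Quadrature.
Variables (U : pt -> Prop) (phi L M f g : fn).
Hypotheses (HU : open U) (Cphi : Cinf U phi) (CL : Cinf U L) (CM : Cinf U M)
  (Cf : Cinf U f) (Cg : Cinf U g).
Hypotheses (RL : riccati U phi L) (RM : riccati U phi M).
Hypothesis Hdata : quadrature_data U phi L M f g.

Let denom : fn := fmult (fmult f g) (fsub M L).
Let form_x : fn := fdiv (fsub (fmult L projp) phi) denom.
Let form_u : fn := fdiv (fopp L) denom.
Let form_p : fn := fdiv (cst 1) denom.

Let denom_neq0 x u p : U (x, u, p) -> denom x u p <> 0.
Proof.
  intros Hq. destruct (Hdata x u p Hq) as (nLM & nf & ng & _).
  unfold denom, fmult, fsub. apply Rmult3_neq0; [exact nf | exact ng | intros E; apply nLM; lra].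
Qed.

Let solved_derivatives x u p : U (x, u, p) ->
  pd Defs.Dx g x u p = (M x u p - (pd Defs.Dx f x u p + p * pd Defs.Du f x u p
      + phi x u p * pd Defs.Dp f x u p) / f x u p) * g x u p
    - p * pd Defs.Du g x u p - phi x u p * pd Defs.Dp g x u p /\
  pd Defs.Du g x u p = - (L x u p * pd Defs.Dp g x u p) /\
  pd Defs.Du f x u p = f x u p * ((pd Defs.Du M x u p + L x u p * pd Defs.Dp M x u p
      - (pd Defs.Du L x u p + M x u p * pd Defs.Dp L x u p)) / (L x u p - M x u p))
    - L x u p * pd Defs.Dp f x u p /\
  pd Defs.Dx L x u p = pd Defs.Du phi x u p + L x u p * pd Defs.Dp phi x u p
    - p * pd Defs.Du L x u p - phi x u p * pd Defs.Dp L x u p - L x u p * L x u p /\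
  pd Defs.Dx M x u p = pd Defs.Du phi x u p + M x u p * pd Defs.Dp phi x u p
    - p * pd Defs.Du M x u p - phi x u p * pd Defs.Dp M x u p - M x u p * M x u p.
Proof.
  intros Hq. destruct (Hdata x u p Hq) as (_ & nf & _ & Ef & Eg & Xg).
  assert (RLq := RL x u p Hq). assert (RMq := RM x u p Hq).
  apply div_eq_mul in Ef; [|exact nf].
  unfold vapp, Xfield, Afield, cst in *; cbn [vx vu vp] in *.
  repeat split; lra.
Qed.

Lemma form_closed x u p : U (x, u, p) ->
  pd Defs.Du form_x x u p = pd Defs.Dx form_u x u p /\
  pd Defs.Dp form_x x u p = pd Defs.Dx form_p x u p /\
  pd Defs.Dp form_u x u p = pd Defs.Du form_p x u p.
Proof.
  intros Hq.
  destruct (Hdata x u p Hq) as (nLM & nf & ng & _).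
  assert (nH := denom_neq0 x u p Hq).
  assert (eL := Cinf_ex_pd _ _ _ _ _ CL Hq). assert (eM := Cinf_ex_pd _ _ _ _ _ CM Hq).
  assert (ef := Cinf_ex_pd _ _ _ _ _ Cf Hq). assert (eg := Cinf_ex_pd _ _ _ _ _ Cg Hq).
  assert (ephi := Cinf_ex_pd _ _ _ _ _ Cphi Hq).
  assert (eH : forall d, ex_pd d denom x u p)
    by (intros d; apply ex_pd_mult; [apply ex_pd_mult | apply ex_pd_sub]; auto).
  assert (eN : forall d, ex_pd d (fsub (fmult L projp) phi) x u p)
    by (intros d; apply ex_pd_sub; auto; apply ex_pd_mult; auto; apply ex_pd_projp).
  unfold form_x, form_u, form_p.
  rewrite !pd_div; auto; try (apply ex_pd_opp; auto); try apply ex_pd_cst.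
  rewrite !pd_sub; auto; try (apply ex_pd_mult; auto; apply ex_pd_projp).
  rewrite !pd_opp, !pd_cst.
  unfold denom. rewrite !pd_mult; auto;
    try (apply ex_pd_mult; auto); try (apply ex_pd_sub; auto); try apply ex_pd_projp.
  rewrite !pd_sub, !pd_projp; auto.
  destruct (solved_derivatives x u p Hq) as (-> & -> & -> & -> & ->).
  assert (nML : M x u p - L x u p <> 0) by (intros E; apply nLM; lra).
  unfold vapp, Xfield, Afield, fmult, fsub, fopp, cst, projp; cbn [vx vu vp]; cbv beta.
  repeat split; field; repeat split; assumption.
Qed.

Let Cinf_forms : Cinf U form_x /\ Cinf U form_u /\ Cinf U form_p.
Proof.
  rewrite Cinf_Cn in Cphi, CL, CM, Cf, Cg.
  assert (Cd : forall n, Cn n U denom)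
    by (intros n; apply Cn_mult; [exact HU | apply Cn_mult | apply Cn_sub]; auto).
  split; [|split]; apply Cinf_Cn; intros n; apply Cn_div; auto.
  - apply Cn_sub; auto. apply Cn_mult; auto. apply Cn_projp.
  - apply Cn_opp; auto.
  - apply Cn_cst.
Qed.

Lemma exists_primitive_on_box x0 u0 p0 (r : posreal) : subset3 (box x0 u0 p0 r) U ->
  exists I, Cinf (box x0 u0 p0 r) I /\ grad_system (box x0 u0 p0 r) I
    (fun x u p => (L x u p * p - phi x u p) / (f x u p * g x u p * (M x u p - L x u p)))
    (fun x u p => - L x u p / (f x u p * g x u p * (M x u p - L x u p)))
    (fun x u p => 1 / (f x u p * g x u p * (M x u p - L x u p))).
Proof.
  intros Hsub.
  change (exists I, Cinf (box x0 u0 p0 r) I /\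
    grad_system (box x0 u0 p0 r) I form_x form_u form_p).
  destruct Cinf_forms as (Cx & Cu & Cp).
  apply (Cinf_subset U (box x0 u0 p0 r)) in Cx, Cu, Cp; auto.
  assert (G : grad_system (box x0 u0 p0 r) (axis_integral x0 u0 p0 form_x form_u form_p)
                form_x form_u form_p).
  { apply grad_axis_integral; try (apply Cinf_Cn; assumption).
    intros x u p Hq. apply form_closed, Hsub, Hq. }
  exists (axis_integral x0 u0 p0 form_x form_u form_p). split; [|exact G].
  apply (Cinf_of_grad _ _ form_x form_u form_p); auto. apply box_open.
Qed.

End Quadrature.

Lemma prol_canonical phi lam : prol phi lam (cst 0) (cst 1) = Xfield lam.
Proof.
  unfold prol, Xfield. f_equal.
  apply functional_extensionality; intros x; apply functional_extensionality; intros u;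
  apply functional_extensionality; intros p.
  unfold Alam, vapp. rewrite !pd_cst. unfold cst. ring.
Qed.

Lemma gen_sym_canonical U phi lam : gen_sym U phi (cst 0) (cst 1) lam ->
  Cinf U lam /\ riccati U phi lam.
Proof.
  intros [_ [_ [Hl Hb]]]. split; [exact Hl|]. intros x u p Hq.
  cbv zeta in Hb. rewrite prol_canonical in Hb.
  destruct (Hb x u p Hq) as [_ [_ Hp]].
  unfold bracket, Xfield, Alam, vapp, Afield in Hp |- *. cbn [vx vu vp] in Hp |- *.
  rewrite !pd_cst in Hp. unfold cst in Hp |- *. lra.
Qed.

Lemma first_integral_of_grad (V : pt -> Prop) (phi lam h I : fn) : Cinf V I ->
  (forall x u p, V (x, u, p) -> h x u p <> 0) ->
  grad_system V I (fun x u p => (lam x u p * p - phi x u p) / h x u p)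
    (fun x u p => - lam x u p / h x u p) (fun x u p => 1 / h x u p) ->
  first_integral V phi (cst 0) (cst 1) lam I.
Proof.
  intros CI Hh HI. split; [exact CI|]. intros x u p Hq. rewrite prol_canonical.
  destruct (grad_system_pd _ _ _ _ _ _ _ _ HI Hq) as (Ex & Eu & Ep).
  unfold vapp, Afield, Xfield, cst; cbn [vx vu vp]. rewrite Ex, Eu, Ep.
  split; field; apply Hh, Hq.
Qed.

Lemma independent_rows a b l1 l2 h1 h2 : h1 <> 0 -> h2 <> 0 -> l1 <> l2 ->
  a * (- l1 / h1) + b * (- l2 / h2) = 0 -> a * (1 / h1) + b * (1 / h2) = 0 ->
  a = 0 /\ b = 0.
Proof.
  intros n1 n2 n12 Eu Ep.
  assert (Ea : a / h1 * (l1 - l2) = 0).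
  { replace (a / h1 * (l1 - l2)) with
      (- (a * (- l1 / h1) + b * (- l2 / h2)) - l2 * (a * (1 / h1) + b * (1 / h2)))
      by (field; split; assumption).
    rewrite Eu, Ep. ring. }
  apply Rmult_integral in Ea. destruct Ea as [Ea | Ea]; [|exfalso; apply n12; lra].
  assert (Za : a = 0) by (replace a with (a / h1 * h1) by (field; exact n1); rewrite Ea; ring).
  split; [exact Za|]. subst a.
  replace b with (h2 * (0 * (1 / h1) + b * (1 / h2))) by (field; split; assumption).
  rewrite Ep. ring.
Qed.

Lemma func_indep_of_grads (V : pt -> Prop) (I1 I2 a1 a2 l1 l2 h1 h2 : fn) :
  (forall x u p, V (x, u, p) -> h1 x u p <> 0 /\ h2 x u p <> 0 /\ l1 x u p <> l2 x u p) ->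
  grad_system V I1 a1 (fun x u p => - l1 x u p / h1 x u p) (fun x u p => 1 / h1 x u p) ->
  grad_system V I2 a2 (fun x u p => - l2 x u p / h2 x u p) (fun x u p => 1 / h2 x u p) ->
  func_indep V I1 I2.
Proof.
  intros Hnz G1 G2 x u p Hq a b _ Eu Ep.
  destruct (Hnz x u p Hq) as (n1 & n2 & n12).
  destruct (grad_system_pd _ _ _ _ _ _ _ _ G1 Hq) as (_ & P1u & P1p).
  destruct (grad_system_pd _ _ _ _ _ _ _ _ G2 Hq) as (_ & P2u & P2p).
  rewrite P1u, P2u in Eu. rewrite P1p, P2p in Ep.
  exact (independent_rows a b _ _ _ _ n1 n2 n12 Eu Ep).
Qed.

Lemma Xfield_annihilates (k lam G : fn) x u p : k x u p <> 0 ->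
  vapp (VF (cst 0) k (fun x u p => k x u p * lam x u p)) G x u p = 0 ->
  vapp (Xfield lam) G x u p = 0.
Proof.
  intros Hk HG.
  assert (E : k x u p * vapp (Xfield lam) G x u p = 0)
    by (rewrite <- HG; unfold vapp, Xfield, cst; cbn [vx vu vp]; ring).
  apply Rmult_integral in E. destruct E as [E | E]; [contradiction | exact E].
Qed.

Theorem theorem3 (U : pt -> Prop) (phi lam1 lam2 f1 f2 g1 g2 : fn) :
  open U ->
  Cinf U phi ->
  (* (∂_u, λ1), (∂_u, λ2): generalized C^∞-symmetries, in canonical form *)
  gen_sym U phi (cst 0) (cst 1) lam1 ->
  gen_sym U phi (cst 0) (cst 1) lam2 ->
  (* non-equivalent *)
  ~ A_equiv U phi (cst 0) (cst 1) lam1 (cst 0) (cst 1) lam2 ->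
  Cinf U f1 -> Cinf U f2 -> Cinf U g1 -> Cinf U g2 ->
  (forall x u p, U (x, u, p) ->
     lam1 x u p - lam2 x u p <> 0 /\ f1 x u p <> 0 /\ f2 x u p <> 0 /\
     g1 x u p <> 0 /\ g2 x u p <> 0) ->
  let X1 := VF (cst 0) (cst 1) lam1 in
  let X2 := VF (cst 0) (cst 1) lam2 in
  let rho : fn := fun x u p =>
    (vapp X1 lam2 x u p - vapp X2 lam1 x u p) / (lam1 x u p - lam2 x u p) in
  let Y1 := VF (cst 0) f1 (fun x u p => f1 x u p * lam1 x u p) in
  let Y2 := VF (cst 0) f2 (fun x u p => f2 x u p * lam2 x u p) in
  let rho1 : fn := fun x u p => lam1 x u p - vapp (Afield phi) f1 x u p / f1 x u p in
  let rho2 : fn := fun x u p => lam2 x u p - vapp (Afield phi) f2 x u p / f2 x u p in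
  (forall x u p, U (x, u, p) ->
     vapp X1 f2 x u p / f2 x u p = rho x u p /\
     vapp X2 f1 x u p / f1 x u p = rho x u p /\
     vapp (Afield phi) g1 x u p = rho1 x u p * g1 x u p /\
     vapp Y2 g1 x u p = 0 /\
     vapp (Afield phi) g2 x u p = rho2 x u p * g2 x u p /\
     vapp Y1 g2 x u p = 0) ->
  let h1 : fn := fun x u p => f2 x u p * g2 x u p * (lam2 x u p - lam1 x u p) in
  let h2 : fn := fun x u p => f1 x u p * g1 x u p * (lam1 x u p - lam2 x u p) in
  let sys1 V I := grad_system V I
      (fun x u p => (lam1 x u p * p - phi x u p) / h1 x u p)
      (fun x u p => - lam1 x u p / h1 x u p)
      (fun x u p => 1 / h1 x u p) in
  let sys2 V I := grad_system V I
      (fun x u p => (lam2 x u p * p - phi x u p) / h2 x u p)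
      (fun x u p => - lam2 x u p / h2 x u p)
      (fun x u p => 1 / h2 x u p) in
  (* the systems are solvable (by quadratures), locally around every point *)
  (forall q, U q -> exists V : pt -> Prop, open V /\ V q /\ subset3 V U /\
     exists I1 I2 : fn, Cinf V I1 /\ Cinf V I2 /\ sys1 V I1 /\ sys2 V I2) /\
  (* any solutions are functionally independent first integrals associated
     to (∂_u, λ1) and (∂_u, λ2) respectively *)
  (forall (V : pt -> Prop) (I1 I2 : fn), open V -> subset3 V U ->
     Cinf V I1 -> Cinf V I2 -> sys1 V I1 -> sys2 V I2 ->
     first_integral V phi (cst 0) (cst 1) lam1 I1 /\
     first_integral V phi (cst 0) (cst 1) lam2 I2 /\
     func_indep V I1 I2).
Proof.
  intros HU Hphi GS1 GS2 _ Hf1 Hf2 Hg1 Hg2 Hnz X1 X2 rho Y1 Y2 rho1 rho2 Hrel h1 h2 sys1 sys2.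
  destruct (gen_sym_canonical _ _ _ GS1) as [Hl1 Ric1].
  destruct (gen_sym_canonical _ _ _ GS2) as [Hl2 Ric2].
  assert (D1 : quadrature_data U phi lam1 lam2 f2 g2).
  { intros x u p Hq. destruct (Hnz x u p Hq) as (n12 & nf1 & nf2 & ng1 & ng2).
    destruct (Hrel x u p Hq) as (R1 & _ & _ & _ & R5 & R6).
    exact (conj n12 (conj nf2 (conj ng2 (conj R1 (conj R5
      (Xfield_annihilates f1 lam1 g2 x u p nf1 R6)))))). }
  assert (D2 : quadrature_data U phi lam2 lam1 f1 g1).
  { intros x u p Hq. destruct (Hnz x u p Hq) as (n12 & nf1 & nf2 & ng1 & ng2).
    destruct (Hrel x u p Hq) as (_ & R2 & R3 & R4 & _ & _).
    assert (n21 : lam2 x u p - lam1 x u p <> 0) by (intros E; apply n12; lra).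
    refine (conj n21 (conj nf1 (conj ng1 (conj _ (conj R3
      (Xfield_annihilates f2 lam2 g1 x u p nf2 R4)))))).
    transitivity (rho x u p); [exact R2 | unfold rho, X1, X2, Xfield; field; split; assumption]. }
  split.
  - intros [[x0 u0] p0] Hq. destruct (open_contains_box U x0 u0 p0 HU Hq) as [r Hr].
    destruct (exists_primitive_on_box U phi lam1 lam2 f2 g2 HU Hphi Hl1 Hl2 Hf2 Hg2
      Ric1 Ric2 D1 x0 u0 p0 r Hr) as (I1 & C1 & G1).
    destruct (exists_primitive_on_box U phi lam2 lam1 f1 g1 HU Hphi Hl2 Hl1 Hf1 Hg1
      Ric2 Ric1 D2 x0 u0 p0 r Hr) as (I2 & C2 & G2).
    exists (box x0 u0 p0 r). split; [apply box_open | split; [apply box_center|]].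
    split; [exact Hr|]. exists I1, I2. exact (conj C1 (conj C2 (conj G1 G2))).
  - intros V I1 I2 HV HVU C1 C2 G1 G2.
    assert (Hh : forall x u p, V (x, u, p) ->
      h1 x u p <> 0 /\ h2 x u p <> 0 /\ lam1 x u p <> lam2 x u p).
    { intros x u p Hq. destruct (Hnz x u p (HVU _ Hq)) as (n12 & nf1 & nf2 & ng1 & ng2).
      unfold h1, h2. split; [|split]; [apply Rmult3_neq0; auto; intros E; apply n12; lra
        | apply Rmult3_neq0; auto | intros E; apply n12; lra]. }
    split; [|split].
    + apply (first_integral_of_grad V phi lam1 h1); auto. apply Hh.
    + apply (first_integral_of_grad V phi lam2 h2); auto. apply Hh.
    + exact (func_indep_of_grads V I1 I2 _ _ lam1 lam2 h1 h2 Hh G1 G2).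
Qed.
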